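(* Let $\mathcal C$ be a category and $S\colon\mathcal C\to\mathcal C$ an auto-equivalence. Then: (1) $S'$ is an automorphism of the category $\mathcal C_{/S}\#\mathbb Z$; (2) $H\colon\mathcal C\to\mathcal C_{/S}\#\mathbb Z$ is an equivalence; (3) $S'H\cong HS$ (natural isomorphism).
   Context: $\Bbbk$ is a commutative ring; all categories and functors are $\Bbbk$-linear. The colimit orbit category $\mathcal C_{/S}$ is the $\mathbb Z$-graded category with the objects of $\mathcal C$ and $\mathcal C_{/S}(X,Y)=\bigoplus_{r\in\mathbb Z}\mathcal C^r_{/S}(X,Y)$, where $\mathcal C^r_{/S}(X,Y):=\varinjlim_{m\ge r}\mathcal C(S^{m-r}X,S^mY)$, the transition maps $\mathcal C(S^{m-r}X,S^mY)\to\mathcal C(S^{m+1-r}X,S^{m+1}Y)$ being given by $S$; composition of $[g]\in\mathcal C^b_{/S}(Y,Z)$ represented by $g\colon S^{m-b}Y\to S^mZ$ and $[f]\in\mathcal C^a_{/S}(X,Y)$ represented by $f\colon S^{m-b-a}X\to S^{m-b}Y$ is $[gf]\in\mathcal C^{a+b}_{/S}(X,Z)$, extended bilinearly. For a $\mathbb Z$-graded category $\mathcal B$, $\mathcal B\#\mathbb Z$ has objects $X^{(i)}$ ($X\in\mathcal B$, $i\in\mathbb Z$), $(\mathcal B\#\mathbb Z)(X^{(i)},Y^{(j)})=\mathcal B^{i-j}(X,Y)$, composition from $\mathcal B$. $S'\colon\mathcal C_{/S}\#\mathbb Z\to\mathcal C_{/S}\#\mathbb Z$ is $S'X^{(i)}=X^{(i-1)}$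 and the identity map $\mathcal C^{i-j}_{/S}(X,Y)\to\mathcal C^{i-j}_{/S}(X,Y)$ on morphisms. $H\colon\mathcal C\to\mathcal C_{/S}\#\mathbb Z$ is $HX=X^{(0)}$, $Hf=[f]\in\varinjlim_{m\ge0}\mathcal C(S^mX,S^mY)$. *)

From Stdlib Require Import ClassicalEpsilon.
From HB Require Import structures.
From mathcomp Require Import all_boot all_order all_algebra zify.
Set Implicit Arguments.
Unset Strict Implicit.
Unset Printing Implicit Defensive.
Import Order.TTheory GRing.Theory Num.Theory.
Local Open Scope ring_scope.

Record catd (k : comPzRingType) := CatD {
  obj : Type;
  hom : obj -> obj -> Type;
  hadd : forall X Y, hom X Y -> hom X Y -> hom X Y;
  hscale : forall X Y, k -> hom X Y -> hom X Y;
  comp : forall X Y Z, hom Y Z -> hom X Y -> hom X Z;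
  idm : forall X, hom X X
}.
Arguments obj {k} c : rename.
Arguments hom {k} c _ _ : rename.
Arguments hadd {k C X Y} : rename.
Arguments hscale {k C X Y} : rename.
Arguments comp {k C X Y Z} : rename.
Arguments idm {k C} X : rename.

Record LinCat (k : comPzRingType) := LinCatMk {
  lobj : Type;
  lhom : lobj -> lobj -> lmodType k;
  lcomp : forall X Y Z, lhom Y Z -> lhom X Y -> lhom X Z;
  lidm : forall X, lhom X X;
  lcompA : forall X Y Z W (h : lhom Z W) (g : lhom Y Z) (f : lhom X Y),
      lcomp h (lcomp g f) = lcomp (lcomp h g) f;
  lcomp1m : forall X Y (f : lhom X Y), lcomp (lidm Y) f = f;
  lcompm1 : forall X Y (f : lhom X Y), lcomp f (lidm X) = f;
  lcomp_linl : forall X Y Z (a : k) (g1 g2 : lhom Y Z) (f : lhom X Y),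
      lcomp (a *: g1 + g2) f = a *: lcomp g1 f + lcomp g2 f;
  lcomp_linr : forall X Y Z (a : k) (g : lhom Y Z) (f1 f2 : lhom X Y),
      lcomp g (a *: f1 + f2) = a *: lcomp g f1 + lcomp g f2
}.
Arguments lobj {k} l : rename.
Arguments lhom {k} l _ _ : rename.
Arguments lcomp {k L X Y Z} : rename.
Arguments lidm {k L} X : rename.

Definition catd_of (k : comPzRingType) (C : LinCat k) : catd k :=
  @CatD k (lobj C) (fun X Y => (lhom C X Y : Type))
    (fun X Y f g => f + g) (fun X Y a f => a *: f)
    (fun X Y Z g f => lcomp g f) (fun X => lidm X).
Coercion catd_of : LinCat >-> catd.

Record functor (k : comPzRingType) (A B : catd k) := Functor {
  fobj : obj A -> obj B;
  fhom : forall X Y, hom A X Y -> hom B (fobj X) (fobj Y)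
}.
Arguments fobj {k A B} F X : rename.
Arguments fhom {k A B} F {X Y} f : rename.

Definition is_linfunctor (k : comPzRingType) (A B : catd k) (F : functor A B) :=
  [/\ forall X Y Z (g : hom A Y Z) (f : hom A X Y),
        fhom F (comp g f) = comp (fhom F g) (fhom F f),
      forall X, fhom F (idm X) = idm (fobj F X),
      forall X Y (f g : hom A X Y), fhom F (hadd f g) = hadd (fhom F f) (fhom F g)
    & forall X Y (a : k) (f : hom A X Y), fhom F (hscale a f) = hscale a (fhom F f)].

Definition id_functor (k : comPzRingType) (A : catd k) : functor A A :=
  @Functor k A A (fun X => X) (fun X Y f => f).

Definition comp_functor (k : comPzRingType) (A B D : catd k)
  (G : functor B D) (F : functor A B) : functor A D :=
  @Functor k A D (fun X => fobj G (fobj F X)) (fun X Y f => fhom G (fhom F f)).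

Definition natiso (k : comPzRingType) (A B : catd k) (F G : functor A B) :=
  exists eta : forall X, hom B (fobj F X) (fobj G X),
    (forall X, exists h : hom B (fobj G X) (fobj F X),
        comp (eta X) h = idm (fobj G X) /\ comp h (eta X) = idm (fobj F X)) /\
    (forall X Y (f : hom A X Y), comp (fhom G f) (eta X) = comp (eta Y) (fhom F f)).

Definition is_equivalence (k : comPzRingType) (A B : catd k) (F : functor A B) :=
  is_linfunctor F /\
  exists G : functor B A, is_linfunctor G /\
    natiso (comp_functor G F) (id_functor A) /\
    natiso (comp_functor F G) (id_functor B).

Definition is_automorphism (k : comPzRingType) (A : catd k) (F : functor A A) :=
  [/\ is_linfunctor F, bijective (fobj F)
    & forall X Y, bijective (@fhom k A A F X Y)].

Section Orbit.
Variables (k : comPzRingType) (C : LinCat k) (S : functor C C).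

Definition Sn (n : nat) (X : lobj C) : lobj C := iter n (fobj S) X.

Fixpoint liftn (n : nat) (X Y : lobj C) (p q : nat)
    (f : lhom C (Sn p X) (Sn q Y)) : lhom C (Sn (n + p) X) (Sn (n + q) Y) :=
  match n return lhom C (Sn (n + p) X) (Sn (n + q) Y) with
  | 0 => f
  | n'.+1 => fhom S (liftn n' f)
  end.

Definition castH (X Y : lobj C) (p p' q q' : nat) (e1 : p = p') (e2 : q = q')
    (f : lhom C (Sn p X) (Sn q Y)) : lhom C (Sn p' X) (Sn q' Y) :=
  match e1 in _ = p1, e2 in _ = q1 return lhom C (Sn p1 X) (Sn q1 Y) with
  | erefl, erefl => f end.

(* A representative of an element of C^r_{/S}(X,Y) = colim_{m >= r, m >= 0}
   C(S^{m-r} X, S^m Y): the index m is rq, m - r is rp. *)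
Record orep (r : int) (X Y : lobj C) := ORep {
  rp : nat; rq : nat;
  rdiff : (rq%:Z - rp%:Z)%R = r;
  rf : lhom C (Sn rp X) (Sn rq Y)
}.

Definition orel (r : int) (X Y : lobj C) (x y : orep r X Y) : Prop :=
  exists (n n' : nat) (e1 : (n + rp x = n' + rp y)%N) (e2 : (n + rq x = n' + rq y)%N),
    castH e1 e2 (liftn n (rf x)) = liftn n' (rf y).

Definition ohom (r : int) (X Y : lobj C) :=
  { A : orep r X Y -> Prop | exists x, A = orel x }.

Definition ocls (r : int) (X Y : lobj C) (x : orep r X Y) : ohom r X Y :=
  exist _ (orel x) (ex_intro _ x erefl).

Definition orepr (r : int) (X Y : lobj C) (A : ohom r X Y) : orep r X Y :=
  proj1_sig (constructive_indefinite_description _ (proj2_sig A)).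

Lemma nat_of_diff (p q p' q' : nat) (r : int) :
  (q%:Z - p%:Z)%R = r -> (q'%:Z - p'%:Z)%R = r -> (p' + q = p + q')%N.
Proof.
move=> e e'; apply/eqP; rewrite -eqz_nat !PoszD; apply/eqP; lia.
Qed.

Lemma diff_lift (n p q : nat) (r : int) :
  (q%:Z - p%:Z)%R = r -> ((n + q)%:Z - (n + p)%:Z)%R = r.
Proof. by move=> <-; rewrite !PoszD; lia. Qed.

Definition orep_add (r : int) (X Y : lobj C) (x y : orep r X Y) : orep r X Y :=
  @ORep r X Y (rp y + rp x) (rp y + rq x) (diff_lift (rp y) (rdiff x))
    (liftn (rp y) (rf x) +
     castH (addnC (rp x) (rp y)) (esym (nat_of_diff (rdiff x) (rdiff y)))
       (liftn (rp x) (rf y))).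

Definition orep_scale (r : int) (X Y : lobj C) (a : k) (x : orep r X Y) :
    orep r X Y := @ORep r X Y (rp x) (rq x) (rdiff x) (a *: rf x).

Lemma diff_comp (p q p' q' : nat) (a b c : int) :
  (q%:Z - p%:Z)%R = a -> (q'%:Z - p'%:Z)%R = b -> (a + b)%R = c ->
  ((q + q')%:Z - (p' + p)%:Z)%R = c.
Proof. by move=> <- <- <-; rewrite !PoszD; lia. Qed.

(* Composition of representatives: for f : S^p X -> S^q Y (in C^a) and
   g : S^p' Y -> S^q' Z (in C^b), lift f by S^p' and g by S^q, so that they
   become composable at the common object S^(q+p') Y, and compose. *)
Definition orep_comp (a b c : int) (e : (a + b)%R = c) (X Y Z : lobj C)
    (y : orep b Y Z) (x : orep a X Y) : orep c X Z :=
  @ORep c X Z (rp y + rp x) (rq x + rq y) (diff_comp (rdiff x) (rdiff y) e)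
    (lcomp (liftn (rq x) (rf y))
       (castH erefl (addnC (rp y) (rq x)) (liftn (rp y) (rf x)))).

Definition ohom_add (r : int) (X Y : lobj C) (A B : ohom r X Y) : ohom r X Y :=
  ocls (orep_add (orepr A) (orepr B)).
Definition ohom_scale (r : int) (X Y : lobj C) (a : k) (A : ohom r X Y) :
    ohom r X Y := ocls (orep_scale a (orepr A)).
Definition ohom_comp (a b c : int) (e : (a + b)%R = c) (X Y Z : lobj C)
    (B : ohom b Y Z) (A : ohom a X Y) : ohom c X Z :=
  ocls (orep_comp e (orepr B) (orepr A)).

Lemma diff00 (i : int) : ((0%N)%:Z - (0%N)%:Z)%R = (i - i)%R.
Proof. by rewrite !subrr. Qed.

Lemma diff_trans (i j l : int) : ((i - j) + (j - l))%R = (i - l)%R.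
Proof. by rewrite addrA subrK. Qed.

Definition smash : catd k :=
  @CatD k (lobj C * int)
    (fun Xi Yj => ohom (Xi.2 - Yj.2) Xi.1 Yj.1)
    (fun Xi Yj A B => ohom_add A B)
    (fun Xi Yj a A => ohom_scale a A)
    (fun Xi Yj Zl B A => ohom_comp (diff_trans Xi.2 Yj.2 Zl.2) B A)
    (fun Xi => ocls (@ORep (Xi.2 - Xi.2) Xi.1 Xi.1 0 0 (diff00 Xi.2)
                        (lidm Xi.1))).

Lemma diff_shift (i j : int) : (i - j)%R = ((i - 1) - (j - 1))%R.
Proof. by rewrite opprB addrA subrK. Qed.

Definition Sprime : functor smash smash :=
  @Functor k smash smash (fun Xi => (Xi.1, (Xi.2 - 1)%R))
    (fun Xi Yj A => ecast r (ohom r Xi.1 Yj.1) (diff_shift Xi.2 Yj.2) A).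

Definition Hfun : functor C smash :=
  @Functor k C smash (fun X => (X, 0%R))
    (fun X Y f => ocls (@ORep (0 - 0)%R X Y 0 0 (diff00 0) f)).

End Orbit.

(* A morphism X^(i) -> Y^(j) of C_{/S} # Z is a class of maps
   S^(m-i+j) X -> S^m Y of C modulo applying S, and bringing finitely many
   classes to a common index m reduces every categorical law to C.  The shift
   S' only relabels degrees, hence is an automorphism, and id_{S X}, read as a
   map of degree -1 from X to S X, gives S'H ~= HS.  For H: as S is fully
   faithful, each class of degree 0 has a unique representative with m = 0,
   so H is fully faithful; as S is essentially surjective, X^(n) ~= Y^(0)
   whenever S^n Y ~= X (n >= 0), while X^(n) ~= (S^(-n) X)^(0) for n < 0.  A
   fully faithful, essentially surjective linear functor is an equivalence. *)

From Pilot Require Import Defs.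
From Stdlib Require Import ClassicalEpsilon JMeq ProofIrrelevance.
From Stdlib Require Import FunctionalExtensionality PropExtensionality.
From mathcomp Require Import all_boot all_order all_algebra zify.
Set Implicit Arguments. Unset Strict Implicit. Unset Printing Implicit Defensive.
Import GRing.Theory.

Section CategoryNotions.
Variable k : comPzRingType.

Definition faithful (A B : catd k) (F : functor A B) :=
  forall X Y (f g : Defs.hom A X Y), fhom F f = fhom F g -> f = g.

Definition full (A B : catd k) (F : functor A B) :=
  forall X Y (h : Defs.hom B (fobj F X) (fobj F Y)), exists f, fhom F f = h.

Definition isomorphic (B : catd k) (X Y : Defs.obj B) :=
  exists (u : Defs.hom B X Y) (v : Defs.hom B Y X),
    Defs.comp u v = Defs.idm Y /\ Defs.comp v u = Defs.idm X.

Definition ess_surj (A B : catd k) (F : functor A B) :=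
  forall Y, exists X, isomorphic (fobj F X) Y.

End CategoryNotions.

Section LinCatTheory.
Variables (k : comPzRingType) (A : LinCat k).

Lemma lcompDl X Y Z (g1 g2 : lhom A Y Z) (f : lhom A X Y) :
  lcomp (g1 + g2)%R f = (lcomp g1 f + lcomp g2 f)%R.
Proof. by have := lcomp_linl 1 g1 g2 f; rewrite !scale1r. Qed.

Lemma lcompDr X Y Z (g : lhom A Y Z) (f1 f2 : lhom A X Y) :
  lcomp g (f1 + f2)%R = (lcomp g f1 + lcomp g f2)%R.
Proof. by have := lcomp_linr 1 g f1 f2; rewrite !scale1r. Qed.

Lemma lcomp0l X Y Z (f : lhom A X Y) : lcomp (0 : lhom A Y Z)%R f = 0%R.
Proof.
have := lcompDl (0 : lhom A Y Z) 0 f; rewrite addr0 => E.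
by apply: (addIr (lcomp 0 f)); rewrite add0r -E.
Qed.

Lemma lcomp0r X Y Z (g : lhom A Y Z) : lcomp g (0 : lhom A X Y)%R = 0%R.
Proof.
have := lcompDr g (0 : lhom A X Y) 0; rewrite addr0 => E.
by apply: (addIr (lcomp g 0)); rewrite add0r -E.
Qed.

Lemma lcompZl X Y Z (a : k) (g : lhom A Y Z) (f : lhom A X Y) :
  lcomp (a *: g)%R f = (a *: lcomp g f)%R.
Proof. by have := lcomp_linl a g 0 f; rewrite !addr0 lcomp0l addr0. Qed.

Lemma lcompZr X Y Z (a : k) (g : lhom A Y Z) (f : lhom A X Y) :
  lcomp g (a *: f)%R = (a *: lcomp g f)%R.
Proof. by have := lcomp_linr a g f 0; rewrite !addr0 lcomp0r addr0. Qed.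

Lemma isomorphic_trans X Y Z :
  isomorphic (B := A) X Y -> isomorphic (B := A) Y Z -> isomorphic (B := A) X Z.
Proof.
move=> [u [v [/= uv vu]]] [u' [v' [/= uv' vu']]]; exists (lcomp u' u), (lcomp v v').
split; rewrite /= -lcompA.
  by rewrite (lcompA u) uv lcomp1m uv'.
by rewrite (lcompA v') vu' lcomp1m vu.
Qed.

End LinCatTheory.

Lemma linfunctor_isomorphic (k : comPzRingType) (A B : catd k) (F : functor A B) X Y :
  is_linfunctor F -> isomorphic X Y -> isomorphic (fobj F X) (fobj F Y).
Proof.
case=> F_comp F_id _ _ [u [v [uv vu]]].
by exists (fhom F u), (fhom F v); rewrite -!F_comp uv vu !F_id.
Qed.

Lemma natiso_id_faithful (k : comPzRingType) (A B : LinCat k)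
    (F : functor A B) (G : functor B A) :
  natiso (comp_functor G F) (id_functor A) -> faithful F.
Proof.
case=> eta [eta_iso eta_nat] X Y f g E.
have [h [/= eta_h h_eta]] := eta_iso X.
have key (f0 : lhom A X Y) : f0 = lcomp (lcomp (eta Y) (fhom G (fhom F f0))) h.
  by rewrite -[lcomp (eta Y) _](eta_nat X Y f0) -lcompA eta_h lcompm1.
by rewrite (key f) (key g) E.
Qed.

Section QuasiInverse.
Variables (k : comPzRingType) (A B : LinCat k) (F : functor A B) (G : functor B A).

Lemma natiso_id_full :
  natiso (comp_functor G F) (id_functor A) -> natiso (comp_functor F G) (id_functor B) ->
  full F.
Proof.
move=> GF FG X Y h; have [eta [eta_iso eta_nat]] := GF.
have [hX [/= eta_hX hX_eta]] := eta_iso X.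
have [hY [/= eta_hY hY_eta]] := eta_iso Y.
exists (lcomp (lcomp (eta Y) (fhom G h)) hX).
apply: (natiso_id_faithful FG); set g := lcomp _ hX.
transitivity (lcomp hY (lcomp (eta Y) (fhom G (fhom F g)))).
  by rewrite lcompA hY_eta lcomp1m.
rewrite /= -[lcomp (eta Y) _](eta_nat X Y g) /g.
by rewrite /= -!lcompA hX_eta lcompm1 !lcompA hY_eta lcomp1m.
Qed.

Lemma natiso_id_ess_surj : natiso (comp_functor F G) (id_functor B) -> ess_surj F.
Proof.
case=> eta [eta_iso _] Y; exists (fobj G Y).
by have [h iso] := eta_iso Y; exists (eta Y), h.
Qed.

End QuasiInverse.

Section FullyFaithfulEquivalence.
Variables (k : comPzRingType) (A B : catd k).
Local Notation "g \o f" := (Defs.comp g f).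

Hypothesis compA : forall X Y Z W (h : Defs.hom B Z W) (g : Defs.hom B Y Z)
  (f : Defs.hom B X Y), h \o (g \o f) = (h \o g) \o f.
Hypothesis comp1m : forall X Y (f : Defs.hom B X Y), idm Y \o f = f.
Hypothesis compm1 : forall X Y (f : Defs.hom B X Y), f \o idm X = f.
Hypothesis compDl : forall X Y Z (g1 g2 : Defs.hom B Y Z) (f : Defs.hom B X Y),
  hadd g1 g2 \o f = hadd (g1 \o f) (g2 \o f).
Hypothesis compDr : forall X Y Z (g : Defs.hom B Y Z) (f1 f2 : Defs.hom B X Y),
  g \o hadd f1 f2 = hadd (g \o f1) (g \o f2).
Hypothesis compZl : forall X Y Z a (g : Defs.hom B Y Z) (f : Defs.hom B X Y),
  hscale a g \o f = hscale a (g \o f).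
Hypothesis compZr : forall X Y Z a (g : Defs.hom B Y Z) (f : Defs.hom B X Y),
  g \o hscale a f = hscale a (g \o f).

Variable F : functor A B.
Hypotheses (F_lin : is_linfunctor F) (F_faithful : faithful F) (F_full : full F)
  (F_ess_surj : ess_surj F).

Theorem fully_faithful_ess_surj_equivalence : is_equivalence F.
Proof.
have [F_comp F_id F_add F_scale] := F_lin.
pose preim X Y (h : Defs.hom B (fobj F X) (fobj F Y)) :=
  proj1_sig (constructive_indefinite_description _ (F_full h)).
have preimK X Y (h : Defs.hom B (fobj F X) (fobj F Y)) : fhom F (preim X Y h) = h.
  exact: proj2_sig (constructive_indefinite_description _ (F_full h)).
pose G0 Y := proj1_sig (constructive_indefinite_description _ (F_ess_surj Y)).
have iso Y : exists uv : Defs.hom B (fobj F (G0 Y)) Y * Defs.hom B Y (fobj F (G0 Y)),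
    uv.1 \o uv.2 = idm Y /\ uv.2 \o uv.1 = idm _.
  have [u [v uv]] := proj2_sig (constructive_indefinite_description _ (F_ess_surj Y)).
  by exists (u, v).
pose u Y := (proj1_sig (constructive_indefinite_description _ (iso Y))).1.
pose v Y := (proj1_sig (constructive_indefinite_description _ (iso Y))).2.
have [uv vu] : (forall Y, u Y \o v Y = idm Y) /\ (forall Y, v Y \o u Y = idm _).
  by split=> Y; have [] := proj2_sig (constructive_indefinite_description _ (iso Y)).
pose G := @Functor k B A G0
  (fun Y Y' (b : Defs.hom B Y Y') => preim _ _ (v Y' \o (b \o u Y))).
have uK Y Y' (b : Defs.hom B Y Y') : u Y' \o fhom (comp_functor F G) b = b \o u Y.
  by rewrite /= preimK compA uv comp1m.
split=> //; exists G; split; [split|split].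
- move=> Y1 Y2 Y3 b2 b1; apply: F_faithful.
  by rewrite F_comp !preimK !compA -(compA _ (u Y2)) uv compm1.
- by move=> Y; apply: F_faithful; rewrite preimK comp1m vu F_id.
- by move=> Y Y' b1 b2; apply: F_faithful; rewrite F_add !preimK compDl compDr.
- by move=> Y Y' a b; apply: F_faithful; rewrite F_scale !preimK compZl compZr.
- exists (fun X => preim _ _ (u (fobj F X))); split.
  + move=> X; exists (preim _ _ (v (fobj F X))).
    by split; apply: F_faithful; rewrite F_comp !preimK ?uv ?vu F_id.
  + move=> X Y f; apply: F_faithful; rewrite !F_comp !preimK.
    by rewrite (compA _ (v _)) uv comp1m.
- exists u; split=> [Y|Y Y' b]; last by rewrite uK.
  by exists (v Y); split; [exact: uv | exact: vu].
Qed.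

End FullyFaithfulEquivalence.

Arguments castH : simpl never.

Section OrbitCategory.
Variables (k : comPzRingType) (C : LinCat k) (S : functor C C).
Hypothesis S_lin : is_linfunctor S.

Local Notation L := (lhom C).
Local Notation Sn := (Sn S).
Local Notation lift := (@liftn _ _ S).
Local Notation rep := (@orep _ C S).

Lemma JMeq_fhom X Y X' Y' (f : L X Y) (f' : L X' Y') :
  X = X' -> Y = Y' -> JMeq f f' -> JMeq (fhom S f) (fhom S f').
Proof. by move=> *; subst. Qed.

Lemma JMeq_lcomp X Y Z X' Y' Z' (f : L X Y) (g : L Y Z) (f' : L X' Y') (g' : L Y' Z') :
  X = X' -> Y = Y' -> Z = Z' -> JMeq f f' -> JMeq g g' -> JMeq (lcomp g f) (lcomp g' f').
Proof. by move=> *; subst. Qed.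

Lemma JMeq_add X Y X' Y' (f g : L X Y) (f' g' : L X' Y') :
  X = X' -> Y = Y' -> JMeq f f' -> JMeq g g' -> JMeq (f + g)%R (f' + g')%R.
Proof. by move=> *; subst. Qed.

Lemma JMeq_castH X Y p p' q q' (e1 : p = p') (e2 : q = q') (f : L (Sn p X) (Sn q Y)) :
  JMeq (castH e1 e2 f) f.
Proof. by case: p' / e1; case: q' / e2. Qed.

Lemma castH_id X Y p q (e1 : p = p) (e2 : q = q) (f : L (Sn p X) (Sn q Y)) :
  castH e1 e2 f = f.
Proof. exact: JMeq_eq (JMeq_castH _ _ _). Qed.

Lemma liftn_comp n X Y Z p q s (f : L (Sn p X) (Sn q Y)) (g : L (Sn q Y) (Sn s Z)) :
  lift n (lcomp g f) = lcomp (lift n g) (lift n f).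
Proof. by have [S_comp _ _ _] := S_lin; elim: n => //= n ->; apply: S_comp. Qed.

Lemma liftn_add n X Y p q (f g : L (Sn p X) (Sn q Y)) :
  lift n (f + g)%R = (lift n f + lift n g)%R.
Proof. by have [_ _ S_add _] := S_lin; elim: n => //= n ->; apply: S_add. Qed.

Lemma liftn_scale n X Y p q (a : k) (f : L (Sn p X) (Sn q Y)) :
  lift n (a *: f)%R = (a *: lift n f)%R.
Proof. by have [_ _ _ S_scale] := S_lin; elim: n => //= n ->; apply: S_scale. Qed.

Lemma liftn_id n X p : lift n (lidm (Sn p X)) = lidm (Sn (n + p) X).
Proof. by have [_ S_id _ _] := S_lin; elim: n => //= n ->; apply: S_id. Qed.

Lemma JMeq_liftn n n' X Y p q p' q' (f : L (Sn p X) (Sn q Y)) (f' : L (Sn p' X) (Sn q' Y)) :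
  n = n' -> p = p' -> q = q' -> JMeq f f' -> JMeq (lift n f) (lift n' f').
Proof. by move=> *; subst. Qed.

Lemma JMeq_liftnD m n X Y p q (f : L (Sn p X) (Sn q Y)) :
  JMeq (lift m (lift n f)) (lift (m + n) f).
Proof.
by elim: m => //= m IH; apply: JMeq_fhom => //; rewrite /Defs.Sn /= ?addnA.
Qed.

Lemma orep_ext r X Y (x y : rep r X Y) :
  rp x = rp y -> rq x = rq y -> JMeq (rf x) (rf y) -> x = y.
Proof.
case: x y => p q d f [p' q' d' f'] /= e1 e2; subst p' q' => ff'.
have E := JMeq_eq ff'; subst f'.
by rewrite (proof_irrelevance _ d d').
Qed.

Definition liftrep n r X Y (x : rep r X Y) : rep r X Y :=
  ORep (diff_lift n (rdiff x)) (lift n (rf x)).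

Lemma liftrepD m n r X Y (x : rep r X Y) : liftrep m (liftrep n x) = liftrep (m + n) x.
Proof. by apply: orep_ext => /=; [exact: addnA | exact: addnA | exact: JMeq_liftnD]. Qed.

Lemma liftrep0 r X Y (x : rep r X Y) : liftrep 0 x = x.
Proof. exact: orep_ext. Qed.

Lemma orelP r X Y (x y : rep r X Y) : orel x y <-> exists m n, liftrep m x = liftrep n y.
Proof.
split=> [[m [n [e1 [e2 E]]]]|[m [n E]]].
  exists m, n; apply: orep_ext => //=.
  by rewrite -E; apply: JMeq_sym; apply: JMeq_castH.
exists m, n, (f_equal (@rp _ _ _ _ _ _) E), (f_equal (@rq _ _ _ _ _ _) E).
apply: JMeq_eq; apply: JMeq_trans (JMeq_castH _ _ _) _.
by change (JMeq (rf (liftrep m x)) (rf (liftrep n y))); rewrite E.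
Qed.

Lemma orel_refl r X Y (x : rep r X Y) : orel x x.
Proof. by apply/orelP; exists 0, 0. Qed.

Lemma orel_sym r X Y (x y : rep r X Y) : orel x y -> orel y x.
Proof. by case/orelP=> m [n E]; apply/orelP; exists n, m. Qed.

Lemma orel_trans r X Y (x y z : rep r X Y) : orel x y -> orel y z -> orel x z.
Proof.
case/orelP=> a [b E1] /orelP [c [d E2]]; apply/orelP; exists (c + a), (b + d).
by rewrite -!liftrepD E1 liftrepD addnC -liftrepD E2 liftrepD.
Qed.

Lemma eq_ocls r X Y (x y : rep r X Y) : ocls x = ocls y <-> orel x y.
Proof.
split=> [/(f_equal (@proj1_sig _ _)) /= E|xy].
  by have := orel_refl y; rewrite -E.
apply: ProofIrrelevanceTheory.subset_eq_compat.
apply: functional_extensionality => z; apply: propositional_extensionality.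
by split; [apply: orel_trans (orel_sym xy) | apply: orel_trans xy].
Qed.

Lemma orepK r X Y (A : ohom S r X Y) : ocls (orepr A) = A.
Proof.
case: A => P h; rewrite /orepr /=.
case: (constructive_indefinite_description _ h) => x /= Ex.
exact: ProofIrrelevanceTheory.subset_eq_compat (esym Ex).
Qed.

Lemma orel_orepr_ocls r X Y (x : rep r X Y) : orel (orepr (ocls x)) x.
Proof. by apply/eq_ocls; rewrite orepK. Qed.

Lemma ohom_ind r X Y (P : ohom S r X Y -> Prop) : (forall x, P (ocls x)) -> forall A, P A.
Proof. by move=> Pcls A; rewrite -(orepK A). Qed.

Lemma ocls_liftrep n r X Y (x : rep r X Y) : ocls (liftrep n x) = ocls x.
Proof. by apply/eq_ocls/orelP; exists 0, n; rewrite liftrep0. Qed.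

Lemma eq_Sn m n X : m = n -> Sn m X = Sn n X.
Proof. by move->. Qed.

Lemma orep_add_liftl n r X Y (x y : rep r X Y) :
  orep_add (liftrep n x) y = liftrep n (orep_add x y).
Proof.
have xy := nat_of_diff (rdiff x) (rdiff y).
apply: orep_ext => /=; try lia.
rewrite liftn_add; apply: JMeq_add; try by apply: eq_Sn; lia.
- apply: JMeq_trans (JMeq_liftnD _ _ _) _; apply: JMeq_sym.
  by apply: JMeq_trans (JMeq_liftnD _ _ _) _; apply: JMeq_liftn => //; lia.
- apply: JMeq_trans (JMeq_castH _ _ _) _; apply: JMeq_sym.
  apply: (JMeq_trans _ (JMeq_liftnD _ _ _)).
  by apply: JMeq_liftn => //; [lia | exact: JMeq_castH].
Qed.

Lemma orep_add_liftr n r X Y (x y : rep r X Y) :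
  orep_add x (liftrep n y) = liftrep n (orep_add x y).
Proof.
have xy := nat_of_diff (rdiff x) (rdiff y).
apply: orep_ext => /=; try lia.
rewrite liftn_add; apply: JMeq_add; try by apply: eq_Sn; lia.
- exact/JMeq_sym/JMeq_liftnD.
- apply: JMeq_trans (JMeq_castH _ _ _) _; apply: JMeq_trans (JMeq_liftnD _ _ _) _.
  apply: JMeq_sym; apply: (@JMeq_trans _ _ _ _ (lift n (lift (rp x) (rf y)))).
    by apply: JMeq_liftn => //; [lia | exact: JMeq_castH].
  by apply: (JMeq_trans (JMeq_liftnD n (rp x) (rf y))); apply: JMeq_liftn => //; lia.
Qed.

Lemma orep_comp_liftl n (a b c : int) (e : (a + b)%R = c) X Y Z
    (y : rep b Y Z) (x : rep a X Y) :
  orep_comp e (liftrep n y) x = liftrep n (orep_comp e y x).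
Proof.
apply: orep_ext => /=; try lia.
rewrite liftn_comp; apply: JMeq_lcomp; try by apply: eq_Sn; lia.
- apply: JMeq_trans (JMeq_castH _ _ _) _; apply: JMeq_sym.
  apply: (JMeq_trans _ (JMeq_liftnD _ _ _)).
  by apply: JMeq_liftn => //; [lia | exact: JMeq_castH].
- apply: JMeq_trans (JMeq_liftnD _ _ _) _; apply: JMeq_sym.
  by apply: JMeq_trans (JMeq_liftnD _ _ _) _; apply: JMeq_liftn => //; lia.
Qed.

Lemma orep_comp_liftr n (a b c : int) (e : (a + b)%R = c) X Y Z
    (y : rep b Y Z) (x : rep a X Y) :
  orep_comp e y (liftrep n x) = liftrep n (orep_comp e y x).
Proof.
apply: orep_ext => /=; try lia.
rewrite liftn_comp; apply: JMeq_lcomp; try by apply: eq_Sn; lia.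
- apply: JMeq_trans (JMeq_castH _ _ _) _; apply: JMeq_trans (JMeq_liftnD _ _ _) _.
  apply: JMeq_sym; apply: (@JMeq_trans _ _ _ _ (lift n (lift (rp y) (rf x)))).
    by apply: JMeq_liftn => //; [lia | exact: JMeq_castH].
  by apply: (JMeq_trans (JMeq_liftnD n (rp y) (rf x))); apply: JMeq_liftn => //; lia.
- exact/JMeq_sym/JMeq_liftnD.
Qed.

Lemma orep_scale_lift n (s : k) r X Y (x : rep r X Y) :
  orep_scale s (liftrep n x) = liftrep n (orep_scale s x).
Proof. by apply: orep_ext => //=; rewrite liftn_scale. Qed.

Lemma orel_add r X Y (x x' y y' : rep r X Y) :
  orel x x' -> orel y y' -> orel (orep_add x y) (orep_add x' y').
Proof.
case/orelP=> a [a' Ea] /orelP [b [b' Eb]].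
apply: (@orel_trans _ _ _ _ (orep_add x' y)); apply/orelP.
  by exists a, a'; rewrite -!orep_add_liftl Ea.
by exists b, b'; rewrite -!orep_add_liftr Eb.
Qed.

Lemma orel_comp (a b c : int) (e : (a + b)%R = c) X Y Z (y y' : rep b Y Z) (x x' : rep a X Y) :
  orel y y' -> orel x x' -> orel (orep_comp e y x) (orep_comp e y' x').
Proof.
case/orelP=> m [m' Em] /orelP [n [n' En]].
apply: (@orel_trans _ _ _ _ (orep_comp e y' x)); apply/orelP.
  by exists m, m'; rewrite -!orep_comp_liftl Em.
by exists n, n'; rewrite -!orep_comp_liftr En.
Qed.

Lemma orel_scale (s : k) r X Y (x x' : rep r X Y) :
  orel x x' -> orel (orep_scale s x) (orep_scale s x').
Proof.
by case/orelP=> m [n E]; apply/orelP; exists m, n; rewrite -!orep_scale_lift E.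
Qed.

Lemma ohom_addE r X Y (x y : rep r X Y) : ohom_add (ocls x) (ocls y) = ocls (orep_add x y).
Proof. by apply/eq_ocls; apply: orel_add; apply: orel_orepr_ocls. Qed.

Lemma ohom_scaleE (s : k) r X Y (x : rep r X Y) :
  ohom_scale s (ocls x) = ocls (orep_scale s x).
Proof. by apply/eq_ocls; apply: orel_scale; apply: orel_orepr_ocls. Qed.

Lemma ohom_compE (a b c : int) (e : (a + b)%R = c) X Y Z (y : rep b Y Z) (x : rep a X Y) :
  ohom_comp e (ocls y) (ocls x) = ocls (orep_comp e y x).
Proof. by apply/eq_ocls; apply: orel_comp; apply: orel_orepr_ocls. Qed.

Lemma ocls_rdiff r X Y p q (d d' : (q%:Z - p%:Z)%R = r) (f : L (Sn p X) (Sn q Y)) :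
  ocls (ORep d f) = ocls (ORep d' f).
Proof. by rewrite (proof_irrelevance _ d d'). Qed.

Lemma diff_adjacent (p q s : nat) (a b c : int) :
  (q%:Z - p%:Z)%R = a -> (s%:Z - q%:Z)%R = b -> (a + b)%R = c -> (s%:Z - p%:Z)%R = c.
Proof. by move=> <- <- <-; lia. Qed.

Lemma ohom_comp_ocls (a b c : int) (e : (a + b)%R = c) X Y Z p q s
    (dx : (q%:Z - p%:Z)%R = a) (dy : (s%:Z - q%:Z)%R = b)
    (f : L (Sn p X) (Sn q Y)) (g : L (Sn q Y) (Sn s Z)) :
  ohom_comp e (ocls (ORep dy g)) (ocls (ORep dx f)) =
  ocls (ORep (diff_adjacent dx dy e) (lcomp g f)).
Proof.
rewrite ohom_compE -(ocls_liftrep q (ORep _ (lcomp g f))); congr ocls.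
by apply: orep_ext => //=; rewrite castH_id liftn_comp.
Qed.

Lemma ohom_add_ocls r X Y p q (d1 d2 : (q%:Z - p%:Z)%R = r) (f1 f2 : L (Sn p X) (Sn q Y)) :
  ohom_add (ocls (ORep d1 f1)) (ocls (ORep d2 f2)) = ocls (ORep d1 (f1 + f2)%R).
Proof.
rewrite ohom_addE -(ocls_liftrep p (ORep d1 _)); congr ocls.
by apply: orep_ext => //=; rewrite castH_id liftn_add.
Qed.

Lemma ohom_scale_ocls (s : k) r X Y p q (d : (q%:Z - p%:Z)%R = r) (f : L (Sn p X) (Sn q Y)) :
  ohom_scale s (ocls (ORep d f)) = ocls (ORep d (s *: f)%R).
Proof. exact: ohom_scaleE. Qed.

Lemma ocls_lidm r X p (d : (p%:Z - p%:Z)%R = r) (d0 : ((0%N)%:Z - (0%N)%:Z)%R = r) :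
  ocls (ORep d (lidm (Sn p X))) = ocls (ORep d0 (lidm X)).
Proof.
rewrite -(ocls_liftrep p (ORep d0 _)); congr ocls.
by apply: orep_ext => /=; rewrite ?addn0 // liftn_id addn0.
Qed.

Lemma ocls_source_index r X Y (x : rep r X Y) N : (rp x <= N)%N ->
  exists q (d : (q%:Z - N%:Z)%R = r) (f : L (Sn N X) (Sn q Y)), ocls x = ocls (ORep d f).
Proof.
move=> le_xN; have e : (N - rp x + rp x = N)%N by rewrite subnK.
have d := diff_lift (N - rp x) (rdiff x); rewrite e in d.
exists _, d, (castH e erefl (lift (N - rp x) (rf x))).
rewrite -(ocls_liftrep (N - rp x)); congr ocls.
by apply: orep_ext => //=; apply: JMeq_sym; apply: JMeq_castH.
Qed.

Lemma ocls_target_index r X Y (x : rep r X Y) N : (rq x <= N)%N ->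
  exists p (d : (N%:Z - p%:Z)%R = r) (f : L (Sn p X) (Sn N Y)), ocls x = ocls (ORep d f).
Proof.
move=> le_xN; have e : (N - rq x + rq x = N)%N by rewrite subnK.
have d := diff_lift (N - rq x) (rdiff x); rewrite e in d.
exists _, d, (castH erefl e (lift (N - rq x) (rf x))).
rewrite -(ocls_liftrep (N - rq x)); congr ocls.
by apply: orep_ext => //=; apply: JMeq_sym; apply: JMeq_castH.
Qed.

Local Notation SM := (smash S).
Local Notation "g \o f" := (@Defs.comp _ SM _ _ _ g f).

Lemma smash_compA (O1 O2 O3 O4 : obj SM) (h : Defs.hom SM O3 O4) (g : Defs.hom SM O2 O3)
    (f : Defs.hom SM O1 O2) :
  h \o (g \o f) = (h \o g) \o f.
Proof.
elim/ohom_ind: f => x; elim/ohom_ind: g => y; elim/ohom_ind: h => z.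
pose N := (rq x + rp y + rp z)%N.
have [p [dx [f ->]]] := @ocls_target_index _ _ _ x N ltac:(lia).
have [q1 [dy [g ->]]] := @ocls_source_index _ _ _ y N ltac:(lia).
have [q2 [dz [h ->]]] : exists q2 dz (h : L (Sn q1 _) (Sn q2 _)), ocls z = ocls (ORep dz h).
  by apply: ocls_source_index; have := nat_of_diff dy (rdiff y); lia.
by rewrite /= !ohom_comp_ocls lcompA; apply: ocls_rdiff.
Qed.

Lemma smash_comp1m (O1 O2 : obj SM) (f : Defs.hom SM O1 O2) : idm O2 \o f = f.
Proof.
elim/ohom_ind: f => -[p q dx f].
have dq : (q%:Z - q%:Z)%R = (O2.2 - O2.2)%R by rewrite !subrr.
by rewrite /= -(ocls_lidm _ dq) ohom_comp_ocls lcomp1m; apply: ocls_rdiff.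
Qed.

Lemma smash_compm1 (O1 O2 : obj SM) (f : Defs.hom SM O1 O2) : f \o idm O1 = f.
Proof.
elim/ohom_ind: f => -[p q dx f].
have dp : (p%:Z - p%:Z)%R = (O1.2 - O1.2)%R by rewrite !subrr.
by rewrite /= -(ocls_lidm _ dp) ohom_comp_ocls lcompm1; apply: ocls_rdiff.
Qed.

Lemma smash_compDl (O1 O2 O3 : obj SM) (g1 g2 : Defs.hom SM O2 O3) (f : Defs.hom SM O1 O2) :
  hadd g1 g2 \o f = hadd (g1 \o f) (g2 \o f).
Proof.
elim/ohom_ind: f => x; elim/ohom_ind: g1 => y1; elim/ohom_ind: g2 => y2.
pose N := (rq x + rp y1 + rp y2)%N.
have [p [dx [f ->]]] := @ocls_target_index _ _ _ x N ltac:(lia).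
have [q1 [d1 [g1 ->]]] := @ocls_source_index _ _ _ y1 N ltac:(lia).
have [q2 [d2 [g2 ->]]] := @ocls_source_index _ _ _ y2 N ltac:(lia).
have eq_q : q2 = q1 by have := nat_of_diff d1 d2; lia.
subst q2; rewrite /= ohom_add_ocls !ohom_comp_ocls ohom_add_ocls lcompDl.
exact: ocls_rdiff.
Qed.

Lemma smash_compDr (O1 O2 O3 : obj SM) (g : Defs.hom SM O2 O3) (f1 f2 : Defs.hom SM O1 O2) :
  g \o hadd f1 f2 = hadd (g \o f1) (g \o f2).
Proof.
elim/ohom_ind: g => y; elim/ohom_ind: f1 => x1; elim/ohom_ind: f2 => x2.
pose N := (rp y + rq x1 + rq x2)%N.
have [q [dy [g ->]]] := @ocls_source_index _ _ _ y N ltac:(lia).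
have [p1 [d1 [f1 ->]]] := @ocls_target_index _ _ _ x1 N ltac:(lia).
have [p2 [d2 [f2 ->]]] := @ocls_target_index _ _ _ x2 N ltac:(lia).
have eq_p : p2 = p1 by have := nat_of_diff d1 d2; lia.
subst p2; rewrite /= ohom_add_ocls !ohom_comp_ocls ohom_add_ocls lcompDr.
exact: ocls_rdiff.
Qed.

Lemma smash_compZl (O1 O2 O3 : obj SM) (s : k) (g : Defs.hom SM O2 O3) (f : Defs.hom SM O1 O2) :
  hscale s g \o f = hscale s (g \o f).
Proof.
elim/ohom_ind: f => x; elim/ohom_ind: g => y.
have [p [dx [f ->]]] := @ocls_target_index _ _ _ x (rq x + rp y) ltac:(lia).
have [q [dy [g ->]]] := @ocls_source_index _ _ _ y (rq x + rp y) ltac:(lia).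
by rewrite /= ohom_scale_ocls !ohom_comp_ocls ohom_scale_ocls lcompZl.
Qed.

Lemma smash_compZr (O1 O2 O3 : obj SM) (s : k) (g : Defs.hom SM O2 O3) (f : Defs.hom SM O1 O2) :
  g \o hscale s f = hscale s (g \o f).
Proof.
elim/ohom_ind: f => x; elim/ohom_ind: g => y.
have [p [dx [f ->]]] := @ocls_target_index _ _ _ x (rq x + rp y) ltac:(lia).
have [q [dy [g ->]]] := @ocls_source_index _ _ _ y (rq x + rp y) ltac:(lia).
by rewrite /= ohom_scale_ocls !ohom_comp_ocls ohom_scale_ocls lcompZr.
Qed.

Local Notation cast e A := (ecast r (ohom S r _ _) e A).

Lemma ecast_ohom_comp (a b c a' b' c' : int) (e : (a + b)%R = c) (e' : (a' + b')%R = c')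
    (ea : a = a') (eb : b = b') (ec : c = c') X Y Z (G : ohom S b Y Z) (F : ohom S a X Y) :
  cast ec (ohom_comp e G F) = ohom_comp e' (cast eb G) (cast ea F).
Proof.
case: a' / ea e'; case: b' / eb; case: c' / ec => e' /=.
by rewrite (proof_irrelevance _ e e').
Qed.

Lemma ecast_ohom_add (a a' : int) (ea : a = a') X Y (F G : ohom S a X Y) :
  cast ea (ohom_add F G) = ohom_add (cast ea F) (cast ea G).
Proof. by case: a' / ea. Qed.

Lemma ecast_ohom_scale (a a' : int) (ea : a = a') X Y (s : k) (F : ohom S a X Y) :
  cast ea (ohom_scale s F) = ohom_scale s (cast ea F).
Proof. by case: a' / ea. Qed.

Lemma ecast_ocls (a a' : int) (ea : a = a') X Y p q (d : (q%:Z - p%:Z)%R = a)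
    (d' : (q%:Z - p%:Z)%R = a') (f : L (Sn p X) (Sn q Y)) :
  cast ea (ocls (ORep d f)) = ocls (ORep d' f).
Proof. by case: a' / ea d' => d' /=; apply: ocls_rdiff. Qed.

Lemma ecastK (a a' : int) (ea : a = a') X Y (F : ohom S a X Y) : cast (esym ea) (cast ea F) = F.
Proof. by case: a' / ea. Qed.

Lemma ecastKV (a a' : int) (ea : a = a') X Y (F : ohom S a' X Y) : cast ea (cast (esym ea) F) = F.
Proof. by case: a' / ea F. Qed.

Lemma Sprime_automorphism : is_automorphism (Sprime S).
Proof.
split.
- split=> [[X i] [Y j] [Z l] G F|[X i]|[X i] [Y j] F G|[X i] [Y j] s F] /=.
  + exact: ecast_ohom_comp.
  + exact: ecast_ocls.
  + exact: ecast_ohom_add.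
  + exact: ecast_ohom_scale.
- exists (fun O : obj SM => (O.1, O.2 + 1)%R) => -[X i] /=; congr pair; lia.
- move=> [X i] [Y j] /=; exists (fun B => cast (esym (diff_shift i j)) B) => B.
  + exact: ecastK.
  + exact: ecastKV.
Qed.

Lemma Sprime_Hfun_natiso :
  natiso (comp_functor (Sprime S) (Hfun S)) (comp_functor (Hfun S) S).
Proof.
have d1 : ((0%N)%:Z - (1%N)%:Z)%R = ((0 - 1) - 0)%R by lia.
have d2 : ((1%N)%:Z - (0%N)%:Z)%R = (0 - (0 - 1))%R by lia.
exists (fun X => ocls (@ORep _ _ S _ X (fobj S X) 1 0 d1 (lidm (fobj S X)))); split.
- move=> X; exists (ocls (@ORep _ _ S _ (fobj S X) X 0 1 d2 (lidm (fobj S X)))).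
  split=> /=; rewrite ohom_comp_ocls lcomp1m; last exact: ocls_lidm.
  exact: ocls_rdiff.
- move=> X Y f /=.
  have d0 : ((0%N)%:Z - (0%N)%:Z)%R = ((0 - 1) - (0 - 1))%R by lia.
  rewrite (ecast_ocls _ _ d0) -(ocls_liftrep 1 (ORep d0 f)) ohom_comp_ocls.
  by rewrite /liftrep ohom_comp_ocls lcomp1m lcompm1; apply: ocls_rdiff.
Qed.

Lemma Hfun_linfunctor : is_linfunctor (Hfun S).
Proof.
split=> [X Y Z g f|X|X Y f g|X Y s f] //=.
- by rewrite ohom_comp_ocls; apply: ocls_rdiff.
- by rewrite ohom_add_ocls.
- by rewrite ohom_scale_ocls.
Qed.

Lemma liftn_inj : faithful S ->
  forall n X Y p q (f g : L (Sn p X) (Sn q Y)), lift n f = lift n g -> f = g.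
Proof. by move=> S_faithful; elim=> [|n IH] //= X Y p q f g /S_faithful /IH. Qed.

Lemma liftn_surj : full S ->
  forall n X Y (h : L (Sn n X) (Sn n Y)), exists f : L (Sn 0 X) (Sn 0 Y), JMeq (lift n f) h.
Proof.
move=> S_full; elim=> [|n IH] X Y h; first by exists h.
have [h' <-] := S_full (Sn n X) (Sn n Y) h; have [f fh'] := IH X Y h'.
by exists f; apply: JMeq_fhom fh'; apply: eq_Sn; rewrite addn0.
Qed.

Lemma Hfun_faithful : faithful S -> faithful (Hfun S).
Proof.
move=> S_faithful X Y f g /eq_ocls /orelP [m [n E]].
have emn : m = n by have := f_equal (@rp _ _ _ _ _ _) E; rewrite /= !addn0.
subst n; apply: (liftn_inj S_faithful (n := m) (p := 0) (q := 0)); apply: JMeq_eq.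
by change (JMeq (rf (liftrep m (ORep (diff00 0) f))) (rf (liftrep m (ORep (diff00 0) g))));
  rewrite E.
Qed.

Lemma Hfun_full : full S -> full (Hfun S).
Proof.
move=> S_full X Y; elim/ohom_ind=> -[p q d h].
have epq : q = p by move: d => /=; lia.
subst q; have [f fh] := liftn_surj S_full h.
exists f; rewrite /= -(ocls_liftrep p); congr ocls.
by apply: orep_ext => /=; [lia | lia | exact: fh].
Qed.

Lemma iter_ess_surj : ess_surj S -> forall n X, exists Y, isomorphic (B := C) (Sn n Y) X.
Proof.
move=> S_ess_surj; elim=> [|n IH] X.
  by exists X, (lidm X), (lidm X); rewrite /= lcomp1m.
have [X' SX'_X] := S_ess_surj X; have [Y SnY_X'] := IH X'.
exists Y; apply: isomorphic_trans SX'_X.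
exact: linfunctor_isomorphic S_lin SnY_X'.
Qed.

Lemma Hfun_ess_surj : ess_surj S -> ess_surj (Hfun S).
Proof.
move=> S_ess_surj [X [] n].
- have [Y [u [v [/= uv vu]]]] := iter_ess_surj S_ess_surj n X.
  have du : ((0%N)%:Z - n%:Z)%R = (0 - Posz n)%R by lia.
  have dv : (n%:Z - (0%N)%:Z)%R = (Posz n - 0)%R by lia.
  exists Y, (ocls (ORep du u)), (ocls (ORep dv v)).
  split; rewrite /= ohom_comp_ocls ?uv ?vu; [exact: ocls_rdiff | exact: ocls_lidm].
- have du : ((n.+1)%:Z - (0%N)%:Z)%R = (0 - Negz n)%R by rewrite NegzE; lia.
  have dv : ((0%N)%:Z - (n.+1)%:Z)%R = (Negz n - 0)%R by rewrite NegzE; lia.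
  exists (Sn n.+1 X), (ocls (@ORep _ _ S _ _ X 0 n.+1 du (lidm (Sn n.+1 X)))).
  exists (ocls (@ORep _ _ S _ X _ n.+1 0 dv (lidm (Sn n.+1 X)))).
  split; rewrite /= ohom_comp_ocls lcomp1m; [exact: ocls_lidm | exact: ocls_rdiff].
Qed.

End OrbitCategory.

Theorem mainTheorem17 (k : comPzRingType) (C : LinCat k) (S : functor C C) :
  is_equivalence S ->
  [/\ is_automorphism (Sprime S),
      is_equivalence (Hfun S)
    & natiso (comp_functor (Sprime S) (Hfun S)) (comp_functor (Hfun S) S)].
Proof.
case=> S_lin [G [_ [GS SG]]].
split; [exact: Sprime_automorphism | | exact: Sprime_Hfun_natiso].
apply: fully_faithful_ess_surj_equivalence.
- exact: smash_compA.
- exact: smash_comp1m.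
- exact: smash_compm1.
- exact: smash_compDl.
- exact: smash_compDr.
- exact: smash_compZl.
- exact: smash_compZr.
- exact: Hfun_linfunctor.
- exact: Hfun_faithful (natiso_id_faithful GS).
- exact: Hfun_full (natiso_id_full GS SG).
- exact: Hfun_ess_surj (natiso_id_ess_surj SG).
Qed.
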